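(* Let $n>2k$, $k\ge t+3$, $t\ge 2$, and let $\mathcal F\subseteq\binom{[n]}{k}$ be a maximal $t$-intersecting family with $\tau_t(\mathcal F)=t+2$ and $\tau_t(\mathcal T_t(\mathcal F))=t+1$. If there exist $U\in\mathcal U_t(\mathcal F)$ and $F\in\mathcal F$ with $|U\cap F|\le t-2$, then $|\mathcal T_t(\mathcal F)|<(t+2)(k-t)+1$.
   Context: A family is $t$-intersecting if any two members meet in at least $t$ elements. A $t$-cover of a family $\mathcal G$ of subsets of $[n]$ is a set $S\subseteq[n]$ with $|S\cap G|\ge t$ for all $G\in\mathcal G$; $\tau_t(\mathcal G)$ is the minimum size of a $t$-cover, and $\mathcal T_t(\mathcal G)$ is the set of all $t$-covers of $\mathcal G$ of size $\tau_t(\mathcal G)$. $\mathcal U_t(\mathcal F)=\mathcal T_t(\mathcal T_t(\mathcal F))$ is the family of all minimum-size $t$-covers of $\mathcal T_t(\mathcal F)$. A $t$-intersecting $\mathcal F\subseteq\binom{[n]}{k}$ is maximal if no $t$-intersecting subfamily of $\binom{[n]}{k}$ properly contains it. *)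

From mathcomp Require Import all_boot.
Set Implicit Arguments. Unset Strict Implicit. Unset Printing Implicit Defensive.

Definition k_uniform (n k : nat) (F : {set {set 'I_n}}) : bool :=
  [forall A in F, #|A| == k].

Definition t_intersecting (n t : nat) (F : {set {set 'I_n}}) : bool :=
  [forall A in F, forall B in F, t <= #|A :&: B|].

Definition is_tcover (n t : nat) (G : {set {set 'I_n}}) (S : {set 'I_n}) : bool :=
  [forall G0 in G, t <= #|S :&: G0|].

(* tau_t(G): minimum size of a t-cover (default n.+1 if no t-cover exists) *)
Definition tau (n t : nat) (G : {set {set 'I_n}}) : nat :=
  \big[minn/n.+1]_(S : {set 'I_n} | is_tcover t G S) #|S|.

Definition Tcov (n t : nat) (G : {set {set 'I_n}}) : {set {set 'I_n}} :=
  [set S | is_tcover t G S & #|S| == tau t G].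

Definition Ucov (n t : nat) (F : {set {set 'I_n}}) : {set {set 'I_n}} :=
  Tcov t (Tcov t F).

Definition maximal_t_intersecting (n k t : nat) (F : {set {set 'I_n}}) : Prop :=
  [/\ k_uniform k F, t_intersecting t F &
      forall F' : {set {set 'I_n}}, k_uniform k F' -> t_intersecting t F' ->
        F \subset F' -> F' = F].

From mathcomp Require Import all_boot order zify.
Set Implicit Arguments. Unset Strict Implicit. Unset Printing Implicit Defensive.

(* Fix U in U_t(F) and F0 in F with |U :&: F0| <= t - 2, and let A = U :&: F0,
   B = U :\: F0, C = F0 :\: U.  A member T of T_t(F) has t + 2 points and meets both
   U and F0 in at least t of them, which forces |A| = t - 2, A \subset T and
   |T :&: B| = |T :&: C| = 2; in particular |B| = 3.  Sort the members of T_t(F) by a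
   point b of B that they miss: those missing b are determined by their traces T :&: C,
   which are pairs of points of the (k - t + 2)-set C.  Two t-covers of F of size at
   most k t-intersect (extend both to members of F, by maximality and n > 2k), so the
   trace families of distinct points of B are cross-intersecting, and two nonempty
   cross-intersecting families of pairs of C have at most 2|C| - 2 members together.
   Finally no two trace families are empty, since otherwise A together with two points
   of B would be a t-cover of T_t(F) of size t; hence |T_t(F)| <= 3(k - t) + 3. *)

Ltac case_bool :=
  repeat match goal with
  | |- context[?x \in ?A] => case: (x \in A)
  | |- context[?x == ?y] => case: (x == y)
  end.

Section PairsOfASet.
Variables (T : finType) (C : {set T}).

Definition pairs := [set g : {set T} | g \subset C & #|g| == 2].

Lemma pairsP (g : {set T}) : reflect (g \subset C /\ #|g| = 2) (g \in pairs).
Proof. by rewrite inE; apply: (iffP andP) => -[-> /eqP]. Qed.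
Arguments pairsP {g}.

Lemma card2_set2 (g : {set T}) u v :
  #|g| = 2 -> u \in g -> v \in g -> u != v -> g = [set u; v].
Proof.
move=> g2 ug vg uv; apply/esym/eqP; rewrite eqEcard cards2 uv g2 leqnn andbT.
by apply/subsetP=> w; rewrite !inE => /orP[]/eqP->.
Qed.

Lemma pairs_other (g : {set T}) x : g \in pairs -> x \in g ->
  exists y, [/\ y \in C, y != x & g = [set x; y]].
Proof.
case/pairsP=> gC g2 xg.
have /cards1P[y gx] : #|g :\ x| == 1 by move: g2; rewrite (cardsD1 x g) xg add1n => -[->].
have /setD1P[yx yg] : y \in g :\ x by rewrite gx set11.
exists y; split=> //; first exact: (subsetP gC).
by apply: card2_set2; rewrite // eq_sym.
Qed.

Lemma not_disjointP (g e : {set T}) :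
  reflect (exists2 w, w \in g & w \in e) (~~ [disjoint g & e]).
Proof.
rewrite -setI_eq0; apply: (iffP (set0Pn _)) => [[w /setIP[]]|[w wg we]].
  by exists w.
by exists w; apply/setIP.
Qed.

Lemma not_disjoint_set2 (g : {set T}) x y :
  ~~ [disjoint g & [set x; y]] = (x \in g) || (y \in g).
Proof.
apply/not_disjointP/orP => [[w wg]|[xg|yg]].
- by rewrite !inE => /orP[]/eqP <-; [left|right].
- by exists x; rewrite ?set21.
- by exists y; rewrite ?set22.
Qed.

Lemma card_star_le (X : {set {set T}}) x (D : {set T}) :
  (forall g, g \in X -> exists2 w, w \in D & g = [set x; w]) -> #|X| <= #|D|.
Proof.
move=> starX; apply: leq_trans (leq_imset_card (fun w => [set x; w]) D).
by apply/subset_leq_card/subsetP=> g /starX[w wD ->]; apply: imset_f.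
Qed.

Lemma card_pairs_through (X : {set {set T}}) x : x \in C -> X \subset pairs ->
  {in X, forall g : {set T}, x \in g} -> #|X| <= #|C| - 1.
Proof.
move=> xC Xp xX.
have -> : #|C| - 1 = #|C :\ x| by rewrite (cardsD1 x C) xC add1n subn1.
apply: card_star_le => g gX.
have [y [yC yx ->]] := pairs_other (subsetP Xp g gX) (xX g gX).
by exists y; rewrite // !inE yx.
Qed.

Lemma card_pairs_through_in (X : {set {set T}}) x : x \in C -> X \subset pairs ->
  #|X :&: [set g : {set T} | x \in g]| <= #|C| - 1.
Proof.
move=> xC Xp; apply: card_pairs_through xC _ _.
  exact: subset_trans (subsetIl _ _) Xp.
by move=> g /setIP[_]; rewrite inE.
Qed.

Lemma card_pairs_meeting_pair (X : {set {set T}}) e :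
  e \in pairs -> X \subset pairs -> {in X, forall g : {set T}, ~~ [disjoint g & e]} ->
  #|X| <= 2 * #|C| - 3.
Proof.
move=> /pairsP[eC e2] Xp meet_e.
have /cards2P[x [y [xy ee]]] : #|e| == 2 by rewrite e2.
have xC : x \in C by apply: (subsetP eC); rewrite ee set21.
have C2 : 2 <= #|C| by rewrite -e2 subset_leq_card.
have through_x := card_pairs_through_in xC Xp.
have avoid_x : #|X :\: [set g : {set T} | x \in g]| <= #|C :\: e|.
  apply: (@card_star_le _ y) => g /setDP[gX]; rewrite inE => xg.
  have := meet_e g gX; rewrite ee not_disjoint_set2 (negbTE xg) /= => yg.
  have [w [wC wy gE]] := pairs_other (subsetP Xp g gX) yg.
  exists w => //; rewrite !inE wC andbT negb_or wy andbT.
  by apply: contraNneq xg => wx; rewrite gE -wx set22.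
rewrite (cardsDS eC) e2 in avoid_x.
rewrite -(cardsID [set g : {set T} | x \in g] X).
by apply: leq_trans (leq_add through_x avoid_x) _; clear -C2; lia.
Qed.

Lemma card_pairs_meeting_two_pairs (X : {set {set T}}) e f :
  e \in pairs -> f \in pairs -> e != f -> ~~ [disjoint e & f] -> X \subset pairs ->
  {in X, forall g : {set T}, ~~ [disjoint g & e]} ->
  {in X, forall g : {set T}, ~~ [disjoint g & f]} -> #|X| <= #|C|.
Proof.
move=> ep fp ef /not_disjointP[x xe xf] Xp meet_e meet_f.
have [y [yC yx eE]] := pairs_other ep xe.
have [z [zC zx fE]] := pairs_other fp xf.
have yz : y != z by apply: contraNneq ef => yz; rewrite eE fE yz.
have xC : x \in C by case/pairsP: ep => eC _; apply: (subsetP eC).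
have through_x := card_pairs_through_in xC Xp.
have avoid_x : #|X :\: [set g : {set T} | x \in g]| <= 1.
  rewrite -(cards1 [set y; z]); apply/subset_leq_card/subsetP => g /setDP[gX].
  rewrite inE => xg; have := meet_e g gX; have := meet_f g gX.
  rewrite eE fE !not_disjoint_set2 (negbTE xg) /= => zg yg.
  by have [_ g2] := pairsP (subsetP Xp g gX); rewrite (card2_set2 g2 yg zg yz) set11.
have C0 : 0 < #|C| by apply/card_gt0P; exists x.
rewrite -(cardsID [set g : {set T} | x \in g] X).
by apply: leq_trans (leq_add through_x avoid_x) _; clear -C0; lia.
Qed.

Lemma card_pairs_meeting_disjoint_pairs (X : {set {set T}}) e f :
  e \in pairs -> f \in pairs -> [disjoint e & f] -> X \subset pairs ->
  {in X, forall g : {set T}, ~~ [disjoint g & e]} ->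
  {in X, forall g : {set T}, ~~ [disjoint g & f]} -> #|X| <= 4.
Proof.
move=> /pairsP[_ e2] /pairsP[_ f2] ef Xp meet_e meet_f.
apply: (@leq_trans #|[set [set p.1; p.2] | p in setX e f]|); last first.
  by rewrite (leq_trans (leq_imset_card _ _)) // cardsX e2 f2.
apply/subset_leq_card/subsetP => g gX.
have /not_disjointP[u ug ue] := meet_e g gX.
have /not_disjointP[v vg vf] := meet_f g gX.
have uv : u != v by apply: contraTneq vf => <-; rewrite (disjointFr ef ue).
have [_ g2] := pairsP (subsetP Xp g gX).
by apply/imsetP; exists (u, v); rewrite ?inE ?ue ?vf //; apply: card2_set2.
Qed.

Lemma card_intersecting_pairs_meeting_disjoint_pairs (X : {set {set T}}) e f :
  e \in pairs -> f \in pairs -> [disjoint e & f] -> X \subset pairs ->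
  {in X, forall g : {set T}, ~~ [disjoint g & e]} ->
  {in X, forall g : {set T}, ~~ [disjoint g & f]} ->
  {in X &, forall g g' : {set T}, ~~ [disjoint g & g']} -> #|X| <= 2.
Proof.
move=> /pairsP[_ /eqP/cards2P[x [y [xy ->]]]] /pairsP[_ /eqP/cards2P[a [b [ab ->]]]].
move=> ef Xp meet_e meet_f Xint.
have neq (u v : T) : u \in [set x; y] -> v \in [set a; b] -> u != v.
  by move=> ue vf; apply: contraTneq vf => <-; rewrite (disjointFr ef ue).
have [xa xb ya yb] : [/\ x != a, x != b, y != a & y != b].
  by split; apply: neq; rewrite ?set21 ?set22.
have at_most_one (p q : {set T}) : [disjoint p & q] -> #|X :&: [set p; q]| <= 1.
  move=> pq; rewrite leqNgt; apply/negP.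
  case/card_gt1P=> g [g' [/setIP[gX gM] /setIP[g'X g'M] gg']].
  have := Xint g g' gX g'X; move: gM g'M gg'.
  by rewrite !inE => /orP[]/eqP-> /orP[]/eqP->; rewrite ?eqxx // ?pq // disjoint_sym pq.
have disj2 (u v w z : T) : u != w -> u != z -> v != w -> v != z ->
    [disjoint [set u; v] & [set w; z]].
  move=> uw uz vw vz; apply: negbNE; rewrite not_disjoint_set2 !inE.
  rewrite ![_ == u]eq_sym ![_ == v]eq_sym.
  by rewrite (negbTE uw) (negbTE uz) (negbTE vw) (negbTE vz).
(* Each member joins a point of [set x; y] to a point of [set a; b]; the four
   possible pairs form two couples of disjoint pairs. *)
have XM : X \subset (X :&: [set [set x; a]; [set y; b]]) :|:
                    (X :&: [set [set x; b]; [set y; a]]).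
  apply/subsetP=> g gX.
  have /not_disjointP[u ug ue] := meet_e g gX.
  have /not_disjointP[v vg vf] := meet_f g gX.
  have [_ g2] := pairsP (subsetP Xp g gX).
  rewrite !inE gX (card2_set2 g2 ug vg (neq u v ue vf)).
  by move: ue vf; rewrite !inE => /orP[]/eqP-> /orP[]/eqP->; rewrite !eqxx ?orbT.
apply: leq_trans (subset_leq_card XM) _; apply: leq_trans (leq_card_setU _ _) _.
by rewrite -[2]/(1 + 1) leq_add // at_most_one // disj2 // eq_sym.
Qed.

Lemma card_intersecting_pairs (X : {set {set T}}) : 4 <= #|C| -> X \subset pairs ->
  {in X &, forall g g' : {set T}, ~~ [disjoint g & g']} -> #|X| <= #|C| - 1.
Proof.
move=> C4 Xp Xint.
have [X_le2|/card_gt2P[e1 [e2 [e3 [[e1X e2X e3X] [e12 e23 e31]]]]]] := leqP #|X| 2.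
  by apply: leq_trans X_le2 _; clear -C4; lia.
have pX g : g \in X -> g \in pairs by apply: subsetP.
have /not_disjointP[u ue1 ue2] := Xint e1 e2 e1X e2X.
have [y [yC yu E1]] := pairs_other (pX e1 e1X) ue1.
have [z [zC zu E2]] := pairs_other (pX e2 e2X) ue2.
have yz : y != z by apply: contraNneq e12 => yz; rewrite E1 E2 yz.
have uC : u \in C by case/pairsP: (pX e1 e1X) => e1C _; apply: (subsetP e1C).
have [ue3|ue3] := boolP (u \in e3).
  have [w [wC wu E3]] := pairs_other (pX e3 e3X) ue3.
  have wy : w != y by apply: contraNneq e31 => wy; rewrite E3 E1 wy.
  have wz : w != z by apply: contraNneq e23 => wz; rewrite E3 E2 wz.
  apply: card_pairs_through uC Xp _ => g gX; apply: contraT => ug.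
  have := Xint g e1 gX e1X; rewrite E1 not_disjoint_set2 (negbTE ug) /= => yg.
  have := Xint g e2 gX e2X; rewrite E2 not_disjoint_set2 (negbTE ug) /= => zg.
  have := Xint g e3 gX e3X; rewrite E3 not_disjoint_set2 (negbTE ug) /=.
  have [_ g2] := pairsP (pX g gX).
  by rewrite (card2_set2 g2 yg zg yz) !inE (negbTE wy) (negbTE wz).
have := Xint e3 e1 e3X e1X; rewrite E1 not_disjoint_set2 (negbTE ue3) /= => ye3.
have := Xint e3 e2 e3X e2X; rewrite E2 not_disjoint_set2 (negbTE ue3) /= => ze3.
have E3 : e3 = [set y; z] by have [_ e3_2] := pairsP (pX e3 e3X); apply: card2_set2.
have XT : X \subset [set [set u; y]; [set u; z]; [set y; z]].
  apply/subsetP => g gX; have [_ g2] := pairsP (pX g gX); rewrite !inE.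
  have [ug|ug] := boolP (u \in g).
    have := Xint g e3 gX e3X; rewrite E3 not_disjoint_set2 => /orP[yg|zg].
      by rewrite (card2_set2 g2 ug yg) ?eqxx // eq_sym.
    by rewrite (card2_set2 g2 ug zg) ?eqxx ?orbT // eq_sym.
  have := Xint g e1 gX e1X; rewrite E1 not_disjoint_set2 (negbTE ug) /= => yg.
  have := Xint g e2 gX e2X; rewrite E2 not_disjoint_set2 (negbTE ug) /= => zg.
  by rewrite (card2_set2 g2 yg zg yz) eqxx !orbT.
have card3 : #|[set [set u; y]; [set u; z]; [set y; z]]| <= 3.
  by apply: leq_trans (leq_card_setU _ _) _; rewrite cards1 cards2 addn1 !ltnS leq_b1.
apply: leq_trans (subset_leq_card XT) (leq_trans card3 _).
by rewrite leq_subRL // (leq_trans _ C4).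
Qed.

Definition intersecting (X : {set {set T}}) :=
  [forall g in X, forall g' in X, ~~ [disjoint g & g']].

Lemma intersectingP (X : {set {set T}}) :
  reflect {in X &, forall g g' : {set T}, ~~ [disjoint g & g']} (intersecting X).
Proof.
apply: (iffP forall_inP) => [Xint g g' gX g'X|Xint g gX].
  exact: (forall_inP (Xint g gX)).
by apply/forall_inP => g' g'X; apply: Xint.
Qed.

Lemma not_intersecting (X : {set {set T}}) : ~~ intersecting X ->
  exists g g', [/\ g \in X, g' \in X & [disjoint g & g']].
Proof.
rewrite negb_forall_in => /exists_inP[g gX].
by rewrite negb_forall_in => /exists_inP[g' g'X]; rewrite negbK; exists g, g'.
Qed.

Lemma card_cross_intersecting_pairs_nonintersecting (E E' : {set {set T}}) :
  5 <= #|C| -> E \subset pairs -> E' \subset pairs ->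
  {in E & E', forall g f : {set T}, ~~ [disjoint g & f]} -> ~~ intersecting E ->
  E' != set0 -> #|E| + #|E'| <= 2 * #|C| - 2.
Proof.
move=> C5 Ep E'p cross /not_intersecting[e1 [e2 [e1E e2E e12]]] /set0Pn[f fE'].
have meet_e1 : {in E', forall f : {set T}, ~~ [disjoint f & e1]}.
  by move=> f' f'E'; rewrite disjoint_sym cross.
have meet_e2 : {in E', forall f : {set T}, ~~ [disjoint f & e2]}.
  by move=> f' f'E'; rewrite disjoint_sym cross.
have [e1p e2p] := (subsetP Ep e1 e1E, subsetP Ep e2 e2E).
have [/intersectingP E'int|] := boolP (intersecting E').
  have := card_intersecting_pairs_meeting_disjoint_pairs e1p e2p e12 E'p
            meet_e1 meet_e2 E'int.
  have [E'_le1|/card_gt1P[f1 [f2 [f1E' f2E' f12]]]] := leqP #|E'| 1.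
    have : #|E| <= 2 * #|C| - 3.
      by apply: (card_pairs_meeting_pair (subsetP E'p f fE') Ep) => g gE; apply: cross.
    by clear -C5 E'_le1; lia.
  have : #|E| <= #|C|.
    apply: (card_pairs_meeting_two_pairs (subsetP E'p f1 f1E') (subsetP E'p f2 f2E') f12).
    - exact: E'int.
    - exact: Ep.
    - by move=> g gE; apply: cross.
    - by move=> g gE; apply: cross.
  by clear -C5; lia.
case/not_intersecting=> [f1 [f2 [f1E' f2E' f12]]].
have := card_pairs_meeting_disjoint_pairs e1p e2p e12 E'p meet_e1 meet_e2.
have : #|E| <= 4.
  apply: (card_pairs_meeting_disjoint_pairs (subsetP E'p f1 f1E') (subsetP E'p f2 f2E'));
  by rewrite // => g gE; apply: cross.
by clear -C5; lia.
Qed.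

Lemma card_cross_intersecting_pairs (E E' : {set {set T}}) :
  5 <= #|C| -> E \subset pairs -> E' \subset pairs ->
  {in E & E', forall g f : {set T}, ~~ [disjoint g & f]} -> E != set0 -> E' != set0 ->
  #|E| + #|E'| <= 2 * #|C| - 2.
Proof.
move=> C5 Ep E'p cross nE nE'.
have cross' : {in E' & E, forall f g : {set T}, ~~ [disjoint f & g]}.
  by move=> f g fE' gE; rewrite disjoint_sym cross.
have [/intersectingP Eint|nEint] := boolP (intersecting E); last first.
  exact: card_cross_intersecting_pairs_nonintersecting C5 Ep E'p cross nEint nE'.
have [/intersectingP E'int|nE'int] := boolP (intersecting E'); last first.
  rewrite addnC.
  exact: card_cross_intersecting_pairs_nonintersecting C5 E'p Ep cross' nE'int nE.
have EE'int : {in E :|: E' &, forall g g' : {set T}, ~~ [disjoint g & g']}.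
  move=> g g' /setUP[gE|gE'] /setUP[g'E|g'E'].
  - exact: Eint.
  - exact: cross.
  - exact: cross'.
  - exact: E'int.
have EE'p : E :|: E' \subset pairs by rewrite subUset Ep E'p.
have := card_intersecting_pairs (leq_trans (leqnSn 4) C5) EE'p EE'int.
have := subset_leq_card (subset_trans (subsetIl E E') (subsetUl E E')).
by have := cardsUI E E'; clear; lia.
Qed.

End PairsOfASet.

Lemma tau_le n t (G : {set {set 'I_n}}) S : is_tcover t G S -> tau t G <= #|S|.
Proof.
by move=> cS; rewrite /tau -minEnat -leEnat; apply: Order.TotalTheory.bigmin_le_cond.
Qed.

Lemma TcovP n t (G : {set {set 'I_n}}) S :
  reflect (is_tcover t G S /\ #|S| = tau t G) (S \in Tcov t G).
Proof. by rewrite inE; apply: (iffP andP) => -[-> /eqP]. Qed.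

Lemma tau_le_common_subset n t (G : {set {set 'I_n}}) (S : {set 'I_n}) :
  t <= #|S| -> {in G, forall T : {set 'I_n}, S \subset T} -> tau t G <= #|S|.
Proof.
move=> tS SG; apply: tau_le; apply/forall_inP => T TG.
by rewrite (setIidPl (SG T TG)).
Qed.

Lemma exists_superset_avoiding (V : finType) (S X : {set V}) k :
  #|S| <= k -> #|S :|: X| + (k - #|S|) <= #|V| ->
  exists H : {set V}, [/\ S \subset H, #|H| = k & H :&: X \subset S].
Proof.
move=> Sk room.
have : k - #|S| <= #|~: (S :|: X)| by rewrite -(leq_add2l #|S :|: X|) cardsC.
case/card_geqP=> s [s_uniq s_size s_out].
have outside w : w \in s -> (w \notin S) && (w \notin X).
  by move/s_out; rewrite !inE negb_or.
exists (S :|: [set w in s]); split; first exact: subsetUl.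
  rewrite cardsU (_ : S :&: _ = set0) ?cards0 ?subn0.
    by rewrite cardsE (card_uniqP s_uniq) s_size subnKC.
  by apply/setP => w; rewrite !inE; apply/negP => /andP[wS /outside]; rewrite wS.
apply/subsetP => w; rewrite !inE => /andP[/orP[//|/outside/andP[_ wX]]].
by rewrite (negbTE wX).
Qed.

Lemma maximal_superset_mem n k t (F : {set {set 'I_n}}) (S H : {set 'I_n}) :
  maximal_t_intersecting k t F -> t <= k -> is_tcover t F S ->
  S \subset H -> #|H| = k -> H \in F.
Proof.
case=> /forall_inP Fk /forall_inP Fint Fmax tk /forall_inP cS SH Hk.
have HF : {in F, forall A, t <= #|H :&: A|}.
  by move=> A AF; apply: leq_trans (cS A AF) (subset_leq_card (setSI A SH)).
suff <- : H |: F = F by rewrite setU11.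
apply: Fmax; last exact: subsetUr.
  by apply/forall_inP => A /setU1P[->|/Fk //]; rewrite Hk.
apply/forall_inP => A /setU1P[->|AF]; apply/forall_inP => B /setU1P[->|BF].
- by rewrite setIid Hk.
- exact: HF.
- by rewrite setIC HF.
- exact: (forall_inP (Fint A AF)).
Qed.

Lemma small_tcovers_t_intersect n k t (F : {set {set 'I_n}}) (S1 S2 : {set 'I_n}) :
  2 * k <= n -> maximal_t_intersecting k t F -> t <= k ->
  is_tcover t F S1 -> is_tcover t F S2 -> #|S1| <= k -> #|S2| <= k ->
  t <= #|S1 :&: S2|.
Proof.
move=> kn maxF tk cS1 cS2 S1k S2k.
(* H1 avoids S2 :\: S1 and H2 avoids H1 :\: S2, so H1 :&: H2 lies in S1 :&: S2. *)
have [H1 [S1H1 H1k H1S2]] :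
    exists H : {set 'I_n}, [/\ S1 \subset H, #|H| = k & H :&: S2 \subset S1].
  apply: exists_superset_avoiding => //; rewrite card_ord.
  by have [+ _] := leq_card_setU S1 S2; lia.
have [H2 [S2H2 H2k H2H1]] :
    exists H : {set 'I_n}, [/\ S2 \subset H, #|H| = k & H :&: H1 \subset S2].
  apply: exists_superset_avoiding => //; rewrite card_ord.
  by have [+ _] := leq_card_setU S2 H1; lia.
have H1F := maximal_superset_mem maxF tk cS1 S1H1 H1k.
have H2F := maximal_superset_mem maxF tk cS2 S2H2 H2k.
case: maxF => _ /forall_inP Fint _.
apply: leq_trans (forall_inP (Fint H1 H1F) H2 H2F) (subset_leq_card _).
apply/subsetP => w /setIP[wH1 wH2].
have wS2 : w \in S2 by apply: (subsetP H2H1); rewrite inE wH2.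
have wS1 : w \in S1 by apply: (subsetP H1S2); rewrite inE wH1.
by rewrite inE wS1.
Qed.

Lemma tcover_split (V : finType) t (T U F0 : {set V}) :
  2 <= t -> #|T| = t + 2 -> t <= #|T :&: F0| -> t <= #|T :&: U| -> #|U :&: F0| <= t - 2 ->
  [/\ #|U :&: F0| = t - 2, U :&: F0 \subset T, #|T :&: (U :\: F0)| = 2,
      #|T :&: (F0 :\: U)| = 2 &
      T = (U :&: F0) :|: (T :&: (U :\: F0)) :|: (T :&: (F0 :\: U))].
Proof.
move=> t2 Tt TF0 TU UF0.
have TF0E : #|T :&: F0| = #|T :&: (U :&: F0)| + #|T :&: (F0 :\: U)|.
  by rewrite -(cardsID U (T :&: F0)) -setIA [F0 :&: U]setIC setIDA.
have TUE : #|T :&: U| = #|T :&: (U :&: F0)| + #|T :&: (U :\: F0)|.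
  by rewrite -(cardsID F0 (T :&: U)) -setIA setIDA.
have TC_sub : T :&: (F0 :\: U) \subset T :\: U.
  by apply/subsetP => x; rewrite !inE; case_bool.
have := cardsID U T; have := subset_leq_card TC_sub.
have := subset_leq_card (subsetIr T (U :&: F0)).
move=> a_le c_le TE.
have [aE bE cE dE] : [/\ #|T :&: (U :&: F0)| = t - 2, #|T :&: (U :\: F0)| = 2,
    #|T :&: (F0 :\: U)| = 2 & #|T :\: U| = #|T :&: (F0 :\: U)|] by split; lia.
have TA : T :&: (U :&: F0) = U :&: F0.
  by apply/eqP; rewrite eqEcard subsetIr aE UF0.
have TDU : T :\: U = T :&: (F0 :\: U).
  by apply/esym/eqP; rewrite eqEcard TC_sub dE leqnn.
split=> //; first by rewrite -TA.
  by rewrite -TA subsetIl.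
by rewrite -TA; apply/setP => x; move/setP/(_ x): TDU; rewrite !inE; case_bool.
Qed.

Lemma sum3_le_pairwise (a1 a2 a3 M : nat) :
  0 < a1 + a2 -> 0 < a2 + a3 -> 0 < a3 + a1 ->
  (0 < a1 -> 0 < a2 -> a1 + a2 <= M) -> (0 < a2 -> 0 < a3 -> a2 + a3 <= M) ->
  (0 < a3 -> 0 < a1 -> a3 + a1 <= M) -> 2 * (a1 + a2 + a3) <= 3 * M.
Proof. by move=> *; lia. Qed.

Section TcoverConfiguration.
Variables (n k t : nat) (F : {set {set 'I_n}}) (U F0 : {set 'I_n}).
Hypotheses (n_gt : 2 * k < n) (k_ge : t + 3 <= k) (t_ge : 2 <= t).
Hypothesis maxF : maximal_t_intersecting k t F.
Hypotheses (tauF : tau t F = t + 2) (tauT : tau t (Tcov t F) = t + 1).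
Hypotheses (UU : U \in Ucov t F) (F0F : F0 \in F) (UF0 : #|U :&: F0| <= t - 2).

Local Notation A := (U :&: F0).
Local Notation B := (U :\: F0).
Local Notation C := (F0 :\: U).

Lemma Tcov_tcover T : T \in Tcov t F -> is_tcover t F T /\ #|T| = t + 2.
Proof. by case/TcovP; rewrite tauF. Qed.

Lemma Tcov_neq0 : Tcov t F != set0.
Proof.
apply/negP => /eqP T0.
have : is_tcover t (Tcov t F) set0 by rewrite T0; apply/forall_inP => ?; rewrite inE.
by move/tau_le; rewrite tauT cards0 addn1.
Qed.

Lemma Tcov_split T : T \in Tcov t F ->
  [/\ #|A| = t - 2, A \subset T, #|T :&: B| = 2, #|T :&: C| = 2 &
      T = A :|: (T :&: B) :|: (T :&: C)].
Proof.
move=> TT; have [/forall_inP cT Tt] := Tcov_tcover TT.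
have /TcovP[/forall_inP cU _] := UU.
have TU : t <= #|T :&: U| by rewrite setIC cU.
exact: tcover_split t_ge Tt (cT F0 F0F) TU UF0.
Qed.

Lemma card_A : #|A| = t - 2.
Proof. by have /set0Pn[T /Tcov_split[]] := Tcov_neq0. Qed.

Lemma card_B : #|B| = 3.
Proof.
have /TcovP[_] := UU; rewrite tauT => Ut.
by have := cardsID F0 U; rewrite card_A Ut; lia.
Qed.

Lemma card_C : #|C| = k - t + 2.
Proof.
have [/forall_inP Fk _ _] := maxF; have /eqP F0k := Fk F0 F0F.
by have := cardsID U F0; rewrite setIC card_A F0k; lia.
Qed.

Definition avoiders b := [set T in Tcov t F | b \notin T].

Definition trace b := [set T :&: C | T in avoiders b].

Lemma in_avoiders b T : (T \in avoiders b) = (T \in Tcov t F) && (b \notin T).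
Proof. exact: in_set. Qed.

Lemma avoider_split b T : b \in B -> T \in avoiders b ->
  T = A :|: (B :\ b) :|: (T :&: C).
Proof.
move=> bB /setIdP[TT bT]; have [_ _ TB _ TE] := Tcov_split TT.
have Bb : #|B :\ b| = 2 by move: card_B; rewrite (cardsD1 b) bB => -[].
suff TBE : T :&: B = B :\ b by rewrite {1}TE TBE.
apply/eqP; rewrite eqEcard Bb TB leqnn andbT.
apply/subsetP => x /setIP[xT xB].
by rewrite in_setD1 xB andbT; apply: contraNneq bT => <-.
Qed.

Lemma card_trace b : b \in B -> #|trace b| = #|avoiders b|.
Proof.
move=> bB; apply: card_in_imset => T T' Tb T'b TCE.
by rewrite (avoider_split bB Tb) (avoider_split bB T'b) TCE.
Qed.

Lemma trace_sub_pairs b : trace b \subset pairs C.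
Proof.
apply/subsetP => _ /imsetP[T /setIdP[TT _] ->]; have [_ _ _ TC _] := Tcov_split TT.
by rewrite inE subsetIr TC.
Qed.

Lemma traces_cross b b' : b \in B -> b' \in B -> b != b' ->
  {in trace b & trace b', forall g f : {set 'I_n}, ~~ [disjoint g & f]}.
Proof.
move=> bB b'B bb' _ _ /imsetP[T Tb ->] /imsetP[T' T'b' ->].
have [[cT Tt] [cT' T't]] := (Tcov_tcover (setIdP Tb).1, Tcov_tcover (setIdP T'b').1).
have TT't : t <= #|T :&: T'|.
  apply: small_tcovers_t_intersect maxF _ cT cT' _ _; rewrite ?Tt ?T't;
  by clear -n_gt k_ge; lia.
have B1 : #|B :\ b :\ b'| = 1.
  have b'Bb : b' \in B :\ b by rewrite in_setD1 eq_sym bb' b'B.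
  by move: card_B; rewrite (cardsD1 b) bB (cardsD1 b' (B :\ b)) b'Bb; clear; lia.
have TT'_sub : T :&: T' \subset A :|: (B :\ b :\ b') :|: (T :&: C :&: (T' :&: C)).
  apply/subsetP => x /setIP[].
  by rewrite {1}(avoider_split bB Tb) {1}(avoider_split b'B T'b') !inE; case_bool.
have := subset_leq_card TT'_sub.
have [+ _] := leq_card_setU (A :|: (B :\ b :\ b')) (T :&: C :&: (T' :&: C)).
have [+ _] := leq_card_setU A (B :\ b :\ b').
by rewrite card_A B1 -setI_eq0 -card_gt0; clear -TT't t_ge; lia.
Qed.

Lemma card_traces_le b b' : b \in B -> b' \in B -> b != b' ->
  0 < #|trace b| -> 0 < #|trace b'| -> #|trace b| + #|trace b'| <= 2 * (k - t + 2) - 2.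
Proof.
move=> bB b'B bb'; rewrite !card_gt0 -card_C => nb nb'.
apply: card_cross_intersecting_pairs; rewrite ?trace_sub_pairs //.
  by rewrite card_C; lia.
exact: traces_cross.
Qed.

Lemma traces_not_both_empty b b' : b \in B -> b' \in B -> b != b' ->
  0 < #|trace b| + #|trace b'|.
Proof.
move=> bB b'B bb'; rewrite card_trace // card_trace // lt0n addn_eq0 !cards_eq0.
apply/negP => /andP[/eqP nob /eqP nob'].
have mem_all c T : avoiders c = set0 -> T \in Tcov t F -> c \in T.
  by move=> noc TT; apply: contraT => cT; rewrite -(in_set0 T) -noc in_avoiders TT.
have S_sub : {in Tcov t F, forall T : {set 'I_n}, A :|: [set b; b'] \subset T}.
  move=> T TT; have [_ AT _ _ _] := Tcov_split TT.
  by rewrite !subUset AT !sub1set !mem_all.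
have S_card : #|A :|: [set b; b']| = t.
  have [/setDP[_ bF0] /setDP[_ b'F0]] := (bB, b'B).
  rewrite cardsU cards2 bb' card_A (_ : A :&: _ = set0) ?cards0; first lia.
  apply/eqP; rewrite setI_eq0 -[[disjoint _ & _]]negbK not_disjoint_set2 !inE.
  by rewrite (negbTE bF0) (negbTE b'F0) !andbF.
have := tau_le_common_subset (eq_leq (esym S_card)) S_sub.
by rewrite tauT S_card addn1 ltnn.
Qed.

Lemma Tcov_sub_avoiders b1 b2 b3 : b1 \in B -> b2 \in B -> b3 \in B ->
  b1 != b2 -> b2 != b3 -> b3 != b1 ->
  Tcov t F \subset avoiders b1 :|: avoiders b2 :|: avoiders b3.
Proof.
move=> b1B b2B b3B b12 b23 b31; apply/subsetP => T TT.
have [_ _ TB _ _] := Tcov_split TT.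
have : ~~ [&& b1 \in T, b2 \in T & b3 \in T].
  apply/negP => /and3P[b1T b2T b3T].
  have : 2 < #|T :&: B|.
    by apply/card_gt2P; exists b1, b2, b3; split; split=> //; apply/setIP.
  by rewrite TB.
by rewrite !in_setU !in_avoiders TT; case: (b1 \in T) (b2 \in T) (b3 \in T) => [] [] [].
Qed.

Lemma card_Tcov_lt : #|Tcov t F| < (t + 2) * (k - t) + 1.
Proof.
have /card_gt2P[b1 [b2 [b3 [[b1B b2B b3B] [b12 b23 b31]]]]] : 2 < #|B| by rewrite card_B.
have Tcov_le : #|Tcov t F| <= #|trace b1| + #|trace b2| + #|trace b3|.
  rewrite !card_trace //.
  apply: leq_trans (subset_leq_card (Tcov_sub_avoiders b1B b2B b3B b12 b23 b31)) _.
  by apply: leq_trans (leq_card_setU _ _) (leq_add (leq_card_setU _ _) (leqnn _)).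
have traces_le := sum3_le_pairwise
  (traces_not_both_empty b1B b2B b12) (traces_not_both_empty b2B b3B b23)
  (traces_not_both_empty b3B b1B b31) (card_traces_le b1B b2B b12)
  (card_traces_le b2B b3B b23) (card_traces_le b3B b1B b31).
have : 4 * (k - t) <= (t + 2) * (k - t) by rewrite leq_mul2r; lia.
move: Tcov_le traces_le k_ge; move: ((t + 2) * (k - t)) => P; clear; lia.
Qed.

End TcoverConfiguration.

Theorem lemma2p6 (n k t : nat) (F : {set {set 'I_n}}) :
  2 * k < n -> t + 3 <= k -> 2 <= t ->
  maximal_t_intersecting k t F ->
  tau t F = t + 2 ->
  tau t (Tcov t F) = t + 1 ->
  (exists U, exists2 A, U \in Ucov t F & A \in F /\ #|U :&: A| <= t - 2) ->
  #|Tcov t F| < (t + 2) * (k - t) + 1.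
Proof.
move=> n_gt k_ge t_ge maxF tauF tauT [U [F0 UU [F0F UF0]]].
exact: card_Tcov_lt n_gt k_ge t_ge maxF tauF tauT UU F0F UF0.
Qed.
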